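(* Let $C_0(\mathbb{G})$ be the algebra of continuous complex-valued functions on $\mathbb{G}$ vanishing at infinity. Every closed ideal $I$ of $C_0(\mathbb{G})$ that is $\mathrm{Aut}(\mathbb{G})$-invariant (i.e. $f\circ H_\varphi\in I$ whenever $f\in I$ and $\varphi\in\mathrm{Aut}(\mathbb{D})$) can be written as $I(E)=\{f\in C_0(\mathbb{G}): f|_E\equiv0\}$, where $E=q^{-1}(\Lambda)$ for some closed subset $\Lambda$ of $[0,1)$.
   Context: $\mathbb{D}$ is the open unit disc and $\mathrm{Aut}(\mathbb{D})$ its holomorphic automorphism group. $\mathbb{G}=\{(z_1+z_2,z_1z_2):z_1,z_2\in\mathbb{D}\}$; $\mathrm{Aut}(\mathbb{G})=\{H_\varphi:\varphi\in\mathrm{Aut}(\mathbb{D})\}$ with $H_\varphi(z_1+z_2,z_1z_2)=(\varphi(z_1)+\varphi(z_2),\varphi(z_1)\varphi(z_2))$. The map $q:\mathbb{G}\to[0,1)$ is $q(z_1+z_2,z_1z_2)=\left|\frac{z_1-z_2}{1-\overline{z_1}z_2}\right|$. *)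

From Stdlib Require Import Reals List.
From Coquelicot Require Import Coquelicot.

Open Scope R_scope.

Definition inD (z : C) : Prop := Cmod z < 1.

Definition holo_on_D (f : C -> C) : Prop :=
  forall z, inD z -> exists l : C, is_derive f z l.

Definition AutD (phi : C -> C) : Prop :=
  holo_on_D phi /\ (forall z, inD z -> inD (phi z)) /\
  exists psi : C -> C, holo_on_D psi /\ (forall z, inD z -> inD (psi z)) /\
    (forall z, inD z -> psi (phi z) = z) /\
    (forall z, inD z -> phi (psi z) = z).

Definition symm (z1 z2 : C) : C * C := (Cplus z1 z2, Cmult z1 z2).

Definition inG (w : C * C) : Prop :=
  exists z1 z2, inD z1 /\ inD z2 /\ w = symm z1 z2.

Definition Gpt : Type := { w : C * C | inG w }.

(* H_phi as a relation on G: H_phi(z1+z2, z1 z2) = (phi z1 + phi z2, phi z1 phi z2) *)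
Definition Hrel (phi : C -> C) (w w' : Gpt) : Prop :=
  exists z1 z2, inD z1 /\ inD z2 /\
    proj1_sig w = symm z1 z2 /\ proj1_sig w' = symm (phi z1) (phi z2).

(* E = q^{-1}(Lambda), q(z1+z2, z1 z2) = |(z1 - z2)/(1 - conj(z1) z2)|
   (q is well defined, so any representation may be used) *)
Definition qval (z1 z2 : C) : R :=
  Cmod (Cdiv (Cminus z1 z2) (Cminus (RtoC 1) (Cmult (Cconj z1) z2))).

Definition qpre (Lam : R -> Prop) (w : Gpt) : Prop :=
  exists z1 z2, inD z1 /\ inD z2 /\ proj1_sig w = symm z1 z2 /\ Lam (qval z1 z2).

Definition dist2 (w w' : C * C) : R :=
  Rmax (Cmod (Cminus (fst w) (fst w'))) (Cmod (Cminus (snd w) (snd w'))).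

Definition open2 (U : C * C -> Prop) : Prop :=
  forall w, U w -> exists r, 0 < r /\ forall w', dist2 w w' < r -> U w'.

Definition compact2 (K : C * C -> Prop) : Prop :=
  forall (I : Type) (U : I -> C * C -> Prop),
    (forall i, open2 (U i)) -> (forall w, K w -> exists i, U i w) ->
    exists l : list I, forall w, K w -> exists i, In i l /\ U i w.

Definition contG (f : Gpt -> C) : Prop :=
  forall (w : Gpt) (eps : R), 0 < eps -> exists delta, 0 < delta /\
    forall w' : Gpt, dist2 (proj1_sig w) (proj1_sig w') < delta ->
      Cmod (Cminus (f w) (f w')) < eps.

Definition vanish_at_inf (f : Gpt -> C) : Prop :=
  forall eps : R, 0 < eps -> exists K : C * C -> Prop,
    compact2 K /\ (forall w, K w -> inG w) /\
    forall w : Gpt, ~ K (proj1_sig w) -> Cmod (f w) < eps.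

Definition C0G (f : Gpt -> C) : Prop := contG f /\ vanish_at_inf f.

Definition closed_ideal (I : (Gpt -> C) -> Prop) : Prop :=
  (forall f, I f -> C0G f) /\
  I (fun _ => RtoC 0) /\
  (forall f g, I f -> I g -> I (fun w => Cplus (f w) (g w))) /\
  (forall (c : C) f, I f -> I (fun w => Cmult c (f w))) /\
  (forall f g, I f -> C0G g -> I (fun w => Cmult (g w) (f w))) /\
  (forall f, C0G f ->
     (forall eps, 0 < eps -> exists g, I g /\
        forall w, Cmod (Cminus (f w) (g w)) <= eps) -> I f).

Definition AutG_invariant (I : (Gpt -> C) -> Prop) : Prop :=
  forall f phi, I f -> AutD phi ->
    forall g : Gpt -> C, (forall w w', Hrel phi w w' -> g w = f w') -> I g.

Definition closed_in_01 (Lam : R -> Prop) : Prop :=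
  (forall x, Lam x -> 0 <= x < 1) /\
  (forall x, 0 <= x < 1 ->
     (forall eps, 0 < eps -> exists y, Lam y /\ Rabs (x - y) < eps) -> Lam x).

Definition ideal_of (E : Gpt -> Prop) (f : Gpt -> C) : Prop :=
  C0G f /\ forall w, E w -> f w = RtoC 0.

(* The Möbius maps z |-> (u z + a) / (1 + conj(a) u z), |u| = 1, |a| < 1, are automorphisms of
   the disc, and a suitable one sends the pair (0, q) to any pair (z1, z2) of points of D with
   pseudo-hyperbolic distance q = q(z1, z2).  Hence the hull {w : f w = 0 for all f in I} of an
   Aut(G)-invariant ideal I is a union of fibres of q: it is q^-1(Lambda) with
   Lambda = {t : (0, t) lies in the hull}, which is closed since it is cut out by continuous
   functions.  Conversely, as in any C_0(X), a closed ideal contains every f vanishing on its hull: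
   the compact set {|f| >= eps} is covered by finitely many balls on which some g_j in I has
   |g_j| > 1/2, so h = sum |g_j|^2 lies in I and is >= 1/4 there; with h' = h (1 + |f|^2),
   f h' / (eps/2 + h') lies in I and is eps-close to f. *)

From Stdlib Require Import Reals List.
From Coquelicot Require Import Coquelicot.
From Stdlib Require Import Lra Psatz Classical ClassicalEpsilon ProofIrrelevance FunctionalExtensionality.
Open Scope R_scope.

Lemma Cmod_lt_of_sq_lt (x y : C) :
  fst x ^ 2 + snd x ^ 2 < fst y ^ 2 + snd y ^ 2 -> Cmod x < Cmod y.
Proof. intro H. unfold Cmod. apply sqrt_lt_1_alt. split; [nra | exact H]. Qed.

Lemma sq_lt_1_of_Cmod_lt_1 (x : C) : Cmod x < 1 -> fst x ^ 2 + snd x ^ 2 < 1.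
Proof. intro H. apply sqrt_lt_0_alt. rewrite sqrt_1. exact H. Qed.

Lemma Cmod_sub_sym (x y : C) : Cmod (Cminus x y) = Cmod (Cminus y x).
Proof. rewrite <- Cmod_opp. f_equal. ring. Qed.

Lemma Rabs_Cmod_sub_le (x y : C) : Rabs (Cmod x - Cmod y) <= Cmod (Cminus x y).
Proof.
  pose proof (Cmod_triangle (Cminus x y) y) as Tx.
  pose proof (Cmod_triangle (Cminus y x) x) as Ty.
  replace (Cplus (Cminus x y) y) with x in Tx by ring.
  replace (Cplus (Cminus y x) x) with y in Ty by ring.
  rewrite Cmod_sub_sym in Ty. apply Rabs_le. lra.
Qed.

Lemma Cmult_neq0 (x y : C) : x <> 0%C -> y <> 0%C -> Cmult x y <> 0%C.
Proof.
  intros Hx Hy E. apply (f_equal Cmod) in E. rewrite Cmod_mult, Cmod_0 in E.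
  apply Cmod_gt_0 in Hx. apply Cmod_gt_0 in Hy. nra.
Qed.

Lemma Cminus_1_neq0 (p : C) : Cmod p < 1 -> Cminus 1 p <> 0%C.
Proof.
  intros H E. replace p with (Cminus 1 (Cminus 1 p)) in H by ring.
  rewrite E in H. replace (Cminus 1 0) with (RtoC 1) in H by ring. rewrite Cmod_1 in H. lra.
Qed.

Lemma Cmod1_neq0 (u : C) : Cmod u = 1 -> u <> 0%C.
Proof. intros H E. subst. rewrite Cmod_0 in H. lra. Qed.

Lemma Cconj_Cmod1 (u : C) : Cmod u = 1 -> Cconj u = Cinv u.
Proof.
  intro H. pose proof (Cmod1_neq0 u H) as Hu.
  pose proof (Cmod2_conj u) as E. rewrite H in E.
  replace (Cconj u) with (Cmult (Cinv u) (Cmult u (Cconj u))) by (field; exact Hu).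
  rewrite <- E. replace (1 ^ 2) with 1 by ring. ring.
Qed.

Notation CK := (AbsRing_NormedModule C_AbsRing).

Lemma is_derive_Cinv (z0 : C) : z0 <> 0%C ->
  @is_derive C_AbsRing CK Cinv z0 (Copp (Cinv (Cmult z0 z0))).
Proof.
  intro Hz. split; [apply is_linear_scal_l|].
  intros x Hx. apply (is_filter_lim_locally_unique (K:=C_AbsRing) (V:=CK)) in Hx. subst x.
  intro eps. pose proof (cond_pos eps) as He.
  set (m := Cmod z0). assert (Hm : 0 < m) by now apply Cmod_gt_0.
  assert (Hr : 0 < Rmin (m / 2) (eps * m ^ 3 / 2)).
  { apply Rmin_pos; [lra|]. pose proof (pow_lt m 3 Hm). nra. }
  exists (mkposreal _ Hr). intros y Hy.
  change (Cmod (Cminus y z0) < Rmin (m / 2) (eps * m ^ 3 / 2)) in Hy.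
  change (Cmod (Cminus (Cminus (/ y) (/ z0)) (Cmult (Cminus y z0) (Copp (/ (z0 * z0)))))
          <= eps * Cmod (Cminus y z0)).
  set (d := Cmod (Cminus y z0)) in *.
  pose proof (Rmin_l (m / 2) (eps * m ^ 3 / 2)). pose proof (Rmin_r (m / 2) (eps * m ^ 3 / 2)).
  assert (Hy0 : m / 2 <= Cmod y).
  { pose proof (Rabs_Cmod_sub_le z0 y) as T. rewrite Cmod_sub_sym in T. apply Rabs_le_between in T.
    fold m d in T. lra. }
  assert (Hyn : @eq C y 0%C -> False) by (intro E; rewrite E, Cmod_0 in Hy0; lra).
  replace (Cminus (Cminus (/ y) (/ z0)) (Cmult (Cminus y z0) (Copp (/ (z0 * z0)))))%C
    with (Cmult (Cminus y z0) (Cmult (Cminus y z0) (/ (y * (z0 * z0)))))%C by (field; auto).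
  rewrite !Cmod_mult, Cmod_inv, !Cmod_mult by (repeat apply Cmult_neq0; auto).
  fold m d. rewrite Rmult_comm. apply Rmult_le_compat_r; [apply Cmod_ge_0|].
  apply Rle_div_l; [pose proof (Rmult_lt_0_compat _ _ Hm Hm); nra|].
  pose proof (Cmod_ge_0 y). nra.
Qed.

Definition Mob (u a z : C) : C :=
  Cdiv (Cplus (Cmult u z) a) (Cplus 1 (Cmult (Cmult (Cconj a) u) z)).

Lemma Cmod_mob_num_lt_den (u a z : C) : Cmod u = 1 -> Cmod a < 1 -> Cmod z < 1 ->
  Cmod (Cplus (Cmult u z) a) < Cmod (Cplus 1 (Cmult (Cmult (Cconj a) u) z)).
Proof.
  intros Hu Ha Hz.
  assert (Hv : Cmod (Cmult u z) < 1) by (rewrite Cmod_mult, Hu; lra).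
  replace (Cmult (Cmult (Cconj a) u) z) with (Cmult (Cconj a) (Cmult u z)) by ring.
  apply sq_lt_1_of_Cmod_lt_1 in Hv. apply sq_lt_1_of_Cmod_lt_1 in Ha.
  destruct (Cmult u z) as [v1 v2]. destruct a as [a1 a2].
  (* |1 + conj(a) v|^2 - |v + a|^2 = (1 - |a|^2) (1 - |v|^2) *)
  apply Cmod_lt_of_sq_lt. simpl in *. nra.
Qed.

Lemma mob_den_neq0 (u a z : C) : Cmod u = 1 -> Cmod a < 1 -> Cmod z < 1 ->
  Cplus 1 (Cmult (Cmult (Cconj a) u) z) <> 0%C.
Proof.
  intros Hu Ha Hz E. pose proof (Cmod_mob_num_lt_den u a z Hu Ha Hz) as K.
  rewrite E, Cmod_0 in K. pose proof (Cmod_ge_0 (Cplus (Cmult u z) a)). lra.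
Qed.

Lemma mob_maps_D (u a z : C) : Cmod u = 1 -> Cmod a < 1 -> inD z -> inD (Mob u a z).
Proof.
  unfold inD, Mob. intros Hu Ha Hz.
  pose proof (mob_den_neq0 u a z Hu Ha Hz) as Hn.
  rewrite Cmod_div by exact Hn. apply Cmod_gt_0 in Hn.
  apply (Rdiv_lt_1 _ _ Hn). exact (Cmod_mob_num_lt_den u a z Hu Ha Hz).
Qed.

Lemma is_derive_affine (p q z : C) :
  exists l, @is_derive C_AbsRing CK (fun t : C => Cplus (Cmult p t) q) z l.
Proof.
  eexists. apply (is_derive_plus (K:=C_AbsRing) (V:=CK) (fun t => mult p t) (fun _ => q)).
  - apply (is_derive_mult (K:=C_AbsRing) (fun _ => p) (fun t => t)).
    + apply (is_derive_const (K:=C_AbsRing) (V:=CK)).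
    + apply (is_derive_id (K:=C_AbsRing)).
    + intros; apply Cmult_comm.
  - apply (is_derive_const (K:=C_AbsRing) (V:=CK)).
Qed.

Lemma mob_holo (u a : C) : Cmod u = 1 -> Cmod a < 1 -> holo_on_D (Mob u a).
Proof.
  intros Hu Ha z Hz.
  destruct (is_derive_affine u a z) as [l1 D1].
  destruct (is_derive_affine (Cmult (Cconj a) u) 1 z) as [l2 D2].
  cut (exists l, @is_derive C_AbsRing CK (Mob u a) z l).
  { intros (l & [Hl1 Hl2 Hl3] & Hdiff). exists l. split; [split|]; assumption. }
  eexists. eapply (is_derive_ext (K:=C_AbsRing) (V:=CK)
    (fun t : C => mult (Cplus (Cmult u t) a) (Cinv (Cplus (Cmult (Cmult (Cconj a) u) t) 1)))).
  { intro t. unfold Mob, Cdiv. rewrite (Cplus_comm _ 1). reflexivity. }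
  apply (is_derive_mult (K:=C_AbsRing)); [exact D1| |intros; apply Cmult_comm].
  apply (is_derive_comp (K:=C_AbsRing) (V:=CK) Cinv); [|exact D2].
  apply is_derive_Cinv. rewrite Cplus_comm. exact (mob_den_neq0 u a z Hu Ha Hz).
Qed.

Lemma mob_invK (u a z : C) : Cmod u = 1 -> Cmod a < 1 -> inD z ->
  Mob (Cconj u) (Copp (Cmult (Cconj u) a)) (Mob u a z) = z.
Proof.
  intros Hu Ha Hz.
  pose proof (mob_den_neq0 u a z Hu Ha Hz) as Hn.
  pose proof (Cmod1_neq0 u Hu) as Hu0.
  assert (Haa : Cminus 1 (Cmult (Cconj a) a) <> 0%C).
  { apply Cminus_1_neq0. rewrite Cmod_mult, Cmod_conj. pose proof (Cmod_ge_0 a). nra. }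
  unfold Mob. rewrite Copp_conj, Cmult_conj, Cconj_conj, (Cconj_Cmod1 u Hu).
  set (ca := Cconj a) in *.
  field. split; [|split]; auto.
  replace (u * (1 + ca * u * z) + - (u * ca) * (u * z + a))%C
    with (Cmult u (Cminus 1 (Cmult ca a))) by ring.
  apply Cmult_neq0; auto.
Qed.

Lemma AutD_mob (u a : C) : Cmod u = 1 -> Cmod a < 1 -> AutD (Mob u a).
Proof.
  intros Hu Ha.
  assert (Hu' : Cmod (Cconj u) = 1) by (rewrite Cmod_conj; exact Hu).
  assert (Ha' : Cmod (Copp (Cmult (Cconj u) a)) < 1) by (rewrite Cmod_opp, Cmod_mult, Hu'; lra).
  split; [apply mob_holo; auto|]. split; [intros; apply mob_maps_D; auto|].
  exists (Mob (Cconj u) (Copp (Cmult (Cconj u) a))).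
  split; [apply mob_holo; auto|]. split; [intros; apply mob_maps_D; auto|].
  split; [intros; apply mob_invK; auto|].
  intros z Hz. pose proof (mob_invK _ _ z Hu' Ha' Hz) as E.
  rewrite Cconj_conj in E.
  replace (Copp (Cmult u (Copp (Cmult (Cconj u) a)))) with a in E; [exact E|].
  rewrite (Cconj_Cmod1 u Hu). field. exact (Cmod1_neq0 u Hu).
Qed.

Lemma mob_at_0 (u a : C) : Mob u a (RtoC 0) = a.
Proof.
  unfold Mob. replace (Cplus 1 (Cmult (Cmult (Cconj a) u) (RtoC 0))) with (RtoC 1) by ring.
  field.
Qed.

Lemma mob_maps_real (u a z : C) (t : R) : inD a -> inD z ->
  Cmult u (RtoC t) = Cdiv (Cminus z a) (Cminus 1 (Cmult (Cconj a) z)) -> Mob u a (RtoC t) = z.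
Proof.
  intros Ha Hz E. unfold Mob.
  replace (Cmult (Cmult (Cconj a) u) (RtoC t)) with (Cmult (Cconj a) (Cmult u (RtoC t))) by ring.
  rewrite E. unfold inD in *. pose proof (Cmod_ge_0 a). pose proof (Cmod_ge_0 z).
  assert (Nz : Cminus 1 (Cmult (Cconj a) z) <> 0%C).
  { apply Cminus_1_neq0. rewrite Cmod_mult, Cmod_conj. nra. }
  assert (Na : Cminus 1 (Cmult (Cconj a) a) <> 0%C).
  { apply Cminus_1_neq0. rewrite Cmod_mult, Cmod_conj. nra. }
  set (c := Cconj a) in *.
  field. split; auto.
  replace (1 - c * z + c * (z - a))%C with (Cminus 1 (Cmult c a)) by ring. exact Na.
Qed.

Lemma mob_transitive (z1 z2 : C) : inD z1 -> inD z2 ->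
  exists u, Cmod u = 1 /\ Mob u z1 (RtoC (qval z1 z2)) = z2.
Proof.
  intros H1 H2.
  set (m := Cdiv (Cminus z2 z1) (Cminus 1 (Cmult (Cconj z1) z2))).
  assert (Hq : qval z1 z2 = Cmod m).
  { unfold qval, m. rewrite <- Cmod_opp. f_equal. unfold Cdiv. ring. }
  rewrite Hq.
  destruct (Req_dec (Cmod m) 0) as [Hm|Hm].
  - exists 1%C. split; [apply Cmod_1|].
    apply mob_maps_real; auto. rewrite Hm. apply Cmod_eq_0 in Hm. fold m. rewrite Hm. ring.
  - assert (Hm' : RtoC (Cmod m) <> 0%C) by (intro E; injection E; intros; lra).
    exists (Cmult m (Cinv (RtoC (Cmod m)))). split.
    + rewrite Cmod_mult, Cmod_inv, Cmod_R, Rabs_pos_eq by (auto using Cmod_ge_0).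
      field. exact Hm.
    + apply mob_maps_real; auto. fold m. field. exact Hm'.
Qed.

Lemma qval_range (z1 z2 : C) : inD z1 -> inD z2 -> 0 <= qval z1 z2 < 1.
Proof.
  intros H1 H2. split; [apply Cmod_ge_0|]. unfold qval.
  assert (K := Cmod_mob_num_lt_den 1 (Copp z1) z2 Cmod_1 ltac:(rewrite Cmod_opp; exact H1) H2).
  replace (Cplus (Cmult 1 z2) (Copp z1)) with (Copp (Cminus z1 z2)) in K by ring.
  replace (Cplus 1 (Cmult (Cmult (Cconj (Copp z1)) 1) z2)) with (Cminus 1 (Cmult (Cconj z1) z2)) in K
    by (rewrite Copp_conj; ring).
  rewrite Cmod_opp in K.
  assert (N : Cminus 1 (Cmult (Cconj z1) z2) <> 0%C).
  { apply Cminus_1_neq0. rewrite Cmod_mult, Cmod_conj. unfold inD in *.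
    pose proof (Cmod_ge_0 z1). pose proof (Cmod_ge_0 z2). nra. }
  rewrite Cmod_div by exact N. apply Cmod_gt_0 in N.
  apply (Rdiv_lt_1 _ _ N). exact K.
Qed.

Lemma inD_0 : inD (RtoC 0).
Proof. unfold inD. rewrite Cmod_0. lra. Qed.

Lemma inD_RtoC (t : R) : 0 <= t < 1 -> inD (RtoC t).
Proof. intro H. unfold inD. rewrite Cmod_R, Rabs_pos_eq; lra. Qed.

Lemma symm_comm (a b : C) : symm a b = symm b a.
Proof. unfold symm. f_equal; ring. Qed.

Lemma symm_inj (z1 z2 a b : C) : symm z1 z2 = symm a b ->
  (a = z1 /\ b = z2) \/ (a = z2 /\ b = z1).
Proof.
  intro E.
  assert (Es : Cplus z1 z2 = Cplus a b) by exact (f_equal fst E).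
  assert (Ep : Cmult z1 z2 = Cmult a b) by exact (f_equal snd E).
  assert (P : Cmult (Cminus a z1) (Cminus a z2) = 0%C).
  { replace (Cmult (Cminus a z1) (Cminus a z2))
      with (Cplus (Cminus (Cmult a a) (Cmult a (Cplus z1 z2))) (Cmult z1 z2)) by ring.
    rewrite Es, Ep. ring. }
  assert (Hb : b = Cminus (Cplus z1 z2) a) by (rewrite Es; ring).
  destruct (classic (Cminus a z1 = 0%C)) as [H|H]; [|destruct (classic (Cminus a z2 = 0%C)) as [H'|H']].
  - left. assert (a = z1) by (replace a with (Cplus (Cminus a z1) z1) by ring; rewrite H; ring).
    subst a. split; [reflexivity|]. rewrite Hb. ring.
  - right. assert (a = z2) by (replace a with (Cplus (Cminus a z2) z2) by ring; rewrite H'; ring).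
    subst a. split; [reflexivity|]. rewrite Hb. ring.
  - exfalso. exact (Cmult_neq0 _ _ H H' P).
Qed.

Lemma Gpt_eq (w1 w2 : Gpt) : proj1_sig w1 = proj1_sig w2 -> w1 = w2.
Proof. destruct w1, w2; simpl; intro; subst; f_equal; apply proof_irrelevance. Qed.

Lemma Hrel_functional (phi : C -> C) (w w1 w2 : Gpt) : Hrel phi w w1 -> Hrel phi w w2 -> w1 = w2.
Proof.
  intros (a & b & _ & _ & Hw & H1) (c & d & _ & _ & Hw' & H2).
  apply Gpt_eq. rewrite H1, H2. rewrite Hw in Hw'.
  destruct (symm_inj a b c d Hw') as [[-> ->]|[-> ->]]; auto using symm_comm.
Qed.

Lemma Hrel_comp (phi : C -> C) (f : Gpt -> C) :
  exists g : Gpt -> C, forall w w', Hrel phi w w' -> g w = f w'.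
Proof.
  exists (fun w => match excluded_middle_informative (exists w', Hrel phi w w') with
    | left H => f (proj1_sig (constructive_indefinite_description _ H))
    | right _ => 0%C end).
  intros w w' Hr. destruct (excluded_middle_informative _) as [H|H]; [|exfalso; eauto].
  destruct (constructive_indefinite_description _ H) as [w'' Hw'']. simpl.
  now rewrite (Hrel_functional phi w w'' w').
Qed.

Definition hull (I : (Gpt -> C) -> Prop) (p : C * C) : Prop :=
  forall f, I f -> forall v : Gpt, proj1_sig v = p -> f v = 0%C.

Lemma hull_invariant (I : (Gpt -> C) -> Prop) (phi : C -> C) (z1 z2 : C) :
  AutG_invariant I -> AutD phi -> inD z1 -> inD z2 ->
  hull I (symm z1 z2) -> hull I (symm (phi z1) (phi z2)).
Proof.
  intros HA Hphi H1 H2 Hz f If v Hv.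
  destruct (Hrel_comp phi f) as [g Hg].
  assert (G0 : inG (symm z1 z2)) by (exists z1, z2; auto).
  rewrite <- (Hg (exist inG _ G0) v).
  - exact (Hz g (HA f phi If Hphi g Hg) (exist inG _ G0) eq_refl).
  - exists z1, z2. auto.
Qed.

Lemma hull_iff_qval (I : (Gpt -> C) -> Prop) (z1 z2 : C) : AutG_invariant I -> inD z1 -> inD z2 ->
  hull I (symm z1 z2) <-> hull I (symm (RtoC 0) (RtoC (qval z1 z2))).
Proof.
  intros HA H1 H2. destruct (mob_transitive z1 z2 H1 H2) as (u & Hu & E).
  assert (Hq := inD_RtoC _ (qval_range z1 z2 H1 H2)).
  split; intro Hz.
  - assert (Hu' : Cmod (Cconj u) = 1) by (rewrite Cmod_conj; exact Hu).
    assert (Ha' : Cmod (Copp (Cmult (Cconj u) z1)) < 1)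
      by (rewrite Cmod_opp, Cmod_mult, Hu'; unfold inD in H1; lra).
    pose proof (hull_invariant I _ z1 z2 HA (AutD_mob _ _ Hu' Ha') H1 H2 Hz) as R.
    pose proof (mob_invK u z1 (RtoC 0) Hu H1 inD_0) as P0. rewrite mob_at_0 in P0.
    pose proof (mob_invK u z1 _ Hu H1 Hq) as Pq. rewrite E in Pq.
    rewrite P0, Pq in R. exact R.
  - pose proof (hull_invariant I _ _ _ HA (AutD_mob u z1 Hu H1) inD_0 Hq Hz) as R.
    rewrite mob_at_0, E in R. exact R.
Qed.

Lemma dist2_refl (p : C * C) : dist2 p p = 0.
Proof.
  unfold dist2. replace (Cminus (fst p) (fst p)) with (RtoC 0) by ring.
  replace (Cminus (snd p) (snd p)) with (RtoC 0) by ring. rewrite Cmod_0. apply Rmax_left. lra.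
Qed.

Lemma dist2_triangle (a b c : C * C) : dist2 a c <= dist2 a b + dist2 b c.
Proof.
  unfold dist2.
  pose proof (Cmod_triangle (Cminus (fst a) (fst b)) (Cminus (fst b) (fst c))) as T1.
  pose proof (Cmod_triangle (Cminus (snd a) (snd b)) (Cminus (snd b) (snd c))) as T2.
  replace (Cplus (Cminus (fst a) (fst b)) (Cminus (fst b) (fst c))) with (Cminus (fst a) (fst c)) in T1 by ring.
  replace (Cplus (Cminus (snd a) (snd b)) (Cminus (snd b) (snd c))) with (Cminus (snd a) (snd c)) in T2 by ring.
  pose proof (Rmax_l (Cmod (Cminus (fst a) (fst b))) (Cmod (Cminus (snd a) (snd b)))).
  pose proof (Rmax_r (Cmod (Cminus (fst a) (fst b))) (Cmod (Cminus (snd a) (snd b)))).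
  pose proof (Rmax_l (Cmod (Cminus (fst b) (fst c))) (Cmod (Cminus (snd b) (snd c)))).
  pose proof (Rmax_r (Cmod (Cminus (fst b) (fst c))) (Cmod (Cminus (snd b) (snd c)))).
  apply Rmax_lub; lra.
Qed.

Lemma dist2_symm_0 (x y : R) :
  dist2 (symm (RtoC 0) (RtoC x)) (symm (RtoC 0) (RtoC y)) = Rabs (x - y).
Proof.
  unfold dist2, symm. simpl.
  replace (Cminus (Cplus (RtoC 0) (RtoC x)) (Cplus (RtoC 0) (RtoC y))) with (RtoC (x - y))
    by (unfold Cminus, Cplus, Copp, RtoC; simpl; f_equal; ring).
  replace (Cminus (Cmult (RtoC 0) (RtoC x)) (Cmult (RtoC 0) (RtoC y))) with (RtoC 0) by ring.
  rewrite Cmod_R, Cmod_0. apply Rmax_left, Rabs_pos.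
Qed.

Lemma open2_ball (c : C * C) (r : R) : open2 (fun p => dist2 c p < r).
Proof.
  intros p Hp. exists (r - dist2 c p). split; [lra|].
  intros p' Hp'. pose proof (dist2_triangle c p p'). lra.
Qed.

Lemma open2_interior (P : Gpt -> Prop) :
  open2 (fun p => exists r, 0 < r /\ forall w : Gpt, dist2 p (proj1_sig w) < r -> P w).
Proof.
  intros p (r & Hr & Hp). exists (r / 2). split; [lra|].
  intros p' Hp'. exists (r / 2). split; [lra|].
  intros w Hw. apply Hp. pose proof (dist2_triangle p p' (proj1_sig w)). lra.
Qed.

Lemma contG_conj (f : Gpt -> C) : contG f -> contG (fun w => Cconj (f w)).
Proof.
  intros Hf w eps He. destruct (Hf w eps He) as (d & Hd & Hw). exists d. split; [exact Hd|].
  intros w' Hw'. rewrite <- Cminus_conj, Cmod_conj. auto.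
Qed.

Lemma contG_const_add (c : C) (f : Gpt -> C) : contG f -> contG (fun w => Cplus c (f w)).
Proof.
  intros Hf w eps He. destruct (Hf w eps He) as (d & Hd & Hw). exists d. split; [exact Hd|].
  intros w' Hw'. replace (Cminus (Cplus c (f w)) (Cplus c (f w'))) with (Cminus (f w) (f w')) by ring.
  auto.
Qed.

Lemma contG_mult (f g : Gpt -> C) : contG f -> contG g -> contG (fun w => Cmult (f w) (g w)).
Proof.
  intros Hf Hg w eps He.
  set (M := Cmod (f w) + Cmod (g w) + 1).
  assert (HM : 1 <= M) by (pose proof (Cmod_ge_0 (f w)); pose proof (Cmod_ge_0 (g w)); unfold M; lra).
  set (e := Rmin 1 (eps / (2 * M))).
  assert (He1 : e <= 1) by apply Rmin_l.
  assert (HeM : e * M <= eps / 2).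
  { apply (Rle_trans _ (eps / (2 * M) * M)); [apply Rmult_le_compat_r, Rmin_r; lra|].
    right. field. lra. }
  assert (He0 : 0 < e) by (apply Rmin_pos; [lra|apply Rdiv_lt_0_compat; lra]).
  destruct (Hf w e He0) as (d1 & Hd1 & H1). destruct (Hg w e He0) as (d2 & Hd2 & H2).
  exists (Rmin d1 d2). split; [apply Rmin_pos; auto|]. intros w' Hw'.
  specialize (H1 w' (Rlt_le_trans _ _ _ Hw' (Rmin_l _ _))).
  specialize (H2 w' (Rlt_le_trans _ _ _ Hw' (Rmin_r _ _))).
  replace (Cminus (Cmult (f w) (g w)) (Cmult (f w') (g w')))
    with (Cplus (Cmult (f w) (Cminus (g w) (g w'))) (Cmult (Cminus (f w) (f w')) (g w'))) by ring.
  eapply Rle_lt_trans; [apply Cmod_triangle|]. rewrite !Cmod_mult.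
  pose proof (Rabs_Cmod_sub_le (g w) (g w')) as Hgw'. apply Rabs_le_between in Hgw'.
  pose proof (Cmod_ge_0 (f w)). pose proof (Cmod_ge_0 (g w')).
  pose proof (Cmod_ge_0 (Cminus (f w) (f w'))). pose proof (Cmod_ge_0 (Cminus (g w) (g w'))).
  unfold M in HeM. nra.
Qed.

Lemma contG_inv (f : Gpt -> C) (m : R) : 0 < m -> (forall w, m <= Cmod (f w)) -> contG f ->
  contG (fun w => Cinv (f w)).
Proof.
  intros Hm Hb Hf w eps He.
  assert (Hm2 : 0 < m * m) by nra.
  destruct (Hf w (eps * (m * m))) as (d & Hd & Hw); [nra|].
  exists d. split; [exact Hd|]. intros w' Hw'. specialize (Hw w' Hw').
  pose proof (Hb w) as B1. pose proof (Hb w') as B2.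
  assert (N1 : f w <> 0%C) by (apply Cmod_gt_0; lra).
  assert (N2 : f w' <> 0%C) by (apply Cmod_gt_0; lra).
  replace (Cminus (Cinv (f w)) (Cinv (f w')))
    with (Cmult (Cminus (f w') (f w)) (Cinv (Cmult (f w) (f w')))) by (field; auto).
  rewrite Cmod_mult, Cmod_inv, Cmod_mult, Cmod_sub_sym by (apply Cmult_neq0; auto).
  apply Rlt_div_l; [nra|].
  apply (Rlt_le_trans _ (eps * (m * m))); [exact Hw|].
  apply Rmult_le_compat_l; [lra|]. apply Rmult_le_compat; lra.
Qed.

Lemma vanish_at_inf_dominated (f g : Gpt -> C) : vanish_at_inf f ->
  (forall eps, 0 < eps -> exists d, 0 < d /\ forall w, Cmod (f w) < d -> Cmod (g w) < eps) ->
  vanish_at_inf g.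
Proof.
  intros Hf Hfg eps He. destruct (Hfg eps He) as (d & Hd & Hw).
  destruct (Hf d Hd) as (K & HK & HKG & HKo). exists K. auto.
Qed.

Lemma C0G_conj_mult (f : Gpt -> C) : C0G f -> C0G (fun w => Cmult (Cconj (f w)) (f w)).
Proof.
  intros [Hc Hv]. split; [apply contG_mult; [apply contG_conj|]; exact Hc|].
  apply (vanish_at_inf_dominated f); [exact Hv|].
  intros e He. exists (Rmin 1 e). split; [apply Rmin_pos; lra|].
  intros w Hw. rewrite Cmod_mult, Cmod_conj.
  pose proof (Rmin_l 1 e). pose proof (Rmin_r 1 e). pose proof (Cmod_ge_0 (f w)). nra.
Qed.

Lemma C0G_conj (f : Gpt -> C) : C0G f -> C0G (fun w => Cconj (f w)).
Proof.
  intros [Hc Hv]. split; [apply contG_conj, Hc|].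
  apply (vanish_at_inf_dominated f); [exact Hv|].
  intros e He. exists e. split; [exact He|]. intros w Hw. rewrite Cmod_conj. exact Hw.
Qed.

Definition sum_sq_mod (l : list (Gpt -> C)) (w : Gpt) : R :=
  fold_right (fun g acc => Cmod (g w) ^ 2 + acc) 0 l.

Lemma sum_sq_mod_nonneg (l : list (Gpt -> C)) (w : Gpt) : 0 <= sum_sq_mod l w.
Proof. induction l as [|g l IH]; simpl; [lra|]. pose proof (pow2_ge_0 (Cmod (g w))). lra. Qed.

Lemma sum_sq_mod_ge (l : list (Gpt -> C)) (g : Gpt -> C) (w : Gpt) :
  In g l -> Cmod (g w) ^ 2 <= sum_sq_mod l w.
Proof.
  induction l as [|g' l IH]; simpl; [contradiction|]. intros [<-|Hg].
  - pose proof (sum_sq_mod_nonneg l w). lra.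
  - pose proof (IH Hg). pose proof (pow2_ge_0 (Cmod (g' w))). lra.
Qed.

Lemma damped_error_le (F H eps : R) : 0 <= F -> 0 <= H -> 0 < eps ->
  (eps <= F -> (1 + F ^ 2) / 4 <= H) -> F * (eps / 2 / (eps / 2 + H)) <= eps.
Proof.
  intros HF HH He Hbig.
  replace (F * (eps / 2 / (eps / 2 + H))) with (F * (eps / 2) / (eps / 2 + H)) by (field; lra).
  apply Rle_div_l; [lra|].
  destruct (Rlt_le_dec F eps) as [Hs|Hl]; [nra|].
  specialize (Hbig Hl). pose proof (pow2_ge_0 (F - 1)). assert (F <= 2 * H) by nra. nra.
Qed.

Section ClosedIdeal.

Variable I : (Gpt -> C) -> Prop.
Hypothesis HI : closed_ideal I.

Lemma ideal_ext (f g : Gpt -> C) : I f -> (forall w, f w = g w) -> I g.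
Proof. intros If E. replace g with f; [exact If|]. apply functional_extensionality, E. Qed.

Lemma ideal_sum_sq_mod (l : list (Gpt -> C)) :
  (forall g, In g l -> I g) -> I (fun w => RtoC (sum_sq_mod l w)).
Proof.
  destruct HI as (HC & H0 & Hadd & _ & Hmul & _).
  induction l as [|g l IH]; intro Il; [exact H0|].
  assert (Ig : I g) by (apply Il; left; reflexivity).
  assert (Il' : forall g', In g' l -> I g') by (intros g' Hg'; apply Il; right; exact Hg').
  eapply ideal_ext; [exact (Hadd _ _ (Hmul _ _ Ig (C0G_conj _ (HC _ Ig))) (IH Il'))|].
  intro w. change (sum_sq_mod (g :: l) w) with (Cmod (g w) ^ 2 + sum_sq_mod l w).
  rewrite RtoC_plus, Cmod2_conj, Cmult_comm. reflexivity.
Qed.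

Lemma ideal_local_unit (w : Gpt) : ~ hull I (proj1_sig w) ->
  exists g r, I g /\ 0 < r /\
    forall w' : Gpt, dist2 (proj1_sig w) (proj1_sig w') < r -> 1 / 2 < Cmod (g w').
Proof.
  intro Hw. destruct HI as (HC & _ & _ & Hscal & _).
  assert (Hf0 : exists f0, I f0 /\ f0 w <> 0%C).
  { apply NNPP. intro Hno. apply Hw. intros f0 If0 v Hv.
    apply Gpt_eq in Hv. subst v. apply NNPP. eauto. }
  destruct Hf0 as (f0 & If0 & Hf0).
  set (g := fun x => Cmult (Cinv (f0 w)) (f0 x)).
  assert (Ig : I g) by (apply Hscal; exact If0).
  assert (g1 : g w = 1%C) by (unfold g; field; exact Hf0).
  destruct (proj1 (HC g Ig) w (1 / 2)) as (d & Hd & Hg); [lra|].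
  exists g, d. split; [exact Ig|]. split; [exact Hd|]. intros w' Hw'.
  specialize (Hg w' Hw'). rewrite g1 in Hg.
  pose proof (Rabs_Cmod_sub_le 1 (g w')) as T. rewrite Cmod_1 in T. apply Rabs_le_between in T. lra.
Qed.

Lemma ideal_finite_local_units (f : Gpt -> C) (eps : R) : 0 < eps -> C0G f ->
  (forall w : Gpt, hull I (proj1_sig w) -> f w = 0%C) ->
  exists l : list (Gpt -> C), (forall g, In g l -> I g) /\
    forall w, eps <= Cmod (f w) -> exists g, In g l /\ 1 / 2 < Cmod (g w).
Proof.
  intros Heps [Hfc Hfv] Hz. destruct HI as (_ & H0 & _).
  set (J := {w : Gpt | eps <= Cmod (f w)}).
  assert (Hloc : forall j : J, exists gr : (Gpt -> C) * R, I (fst gr) /\ 0 < snd gr /\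
    forall w', dist2 (proj1_sig (proj1_sig j)) (proj1_sig w') < snd gr -> 1 / 2 < Cmod (fst gr w')).
  { intros [w Hw]. destruct (ideal_local_unit w) as (g & r & Hg).
    - intro Hh. rewrite (Hz w Hh), Cmod_0 in Hw. lra.
    - exists (g, r). exact Hg. }
  destruct (choice _ Hloc) as [unit Hunit].
  destruct (Hfv eps Heps) as (K & HK & HKG & HKo).
  (* cover K by the balls where the chosen units exceed 1/2, and by the open set where |f| < eps *)
  set (U := fun i : option J => match i with
    | Some j => fun p => dist2 (proj1_sig (proj1_sig j)) p < snd (unit j)
    | None => fun p => exists r, 0 < r /\ forall w, dist2 p (proj1_sig w) < r -> Cmod (f w) < eps
    end).
  destruct (HK (option J) U) as [l Hl].
  { intros [j|]; [apply open2_ball | apply open2_interior]. }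
  { intros p Kp. set (w := exist inG p (HKG p Kp) : Gpt).
    destruct (Rle_lt_dec eps (Cmod (f w))) as [Hle|Hlt].
    - exists (Some (exist _ w Hle)). simpl. rewrite dist2_refl. apply Hunit.
    - exists None. destruct (Hfc w (eps - Cmod (f w))) as (d & Hd & Hw); [lra|].
      exists d. split; [exact Hd|]. intros w' Hw'. specialize (Hw w' Hw').
      pose proof (Rabs_Cmod_sub_le (f w) (f w')) as T. apply Rabs_le_between in T. lra. }
  set (unit_of := fun i : option J => match i with Some j => fst (unit j) | None => fun _ => 0%C end).
  exists (map unit_of l). split.
  - intros g Hg. apply in_map_iff in Hg. destruct Hg as ([j|] & <- & _); [apply Hunit | exact H0].
  - intros w Hw.
    assert (Kw : K (proj1_sig w)) by (apply NNPP; intro Hn; specialize (HKo w Hn); lra).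
    destruct (Hl _ Kw) as ([j|] & Hin & Hu).
    + exists (unit_of (Some j)). split; [apply in_map; exact Hin | apply Hunit, Hu].
    + exfalso. destruct Hu as (r & Hr & Hu). specialize (Hu w). rewrite dist2_refl in Hu.
      specialize (Hu Hr). lra.
Qed.

Lemma ideal_approx_of_bump (f : Gpt -> C) (h : Gpt -> R) (eps : R) :
  0 < eps -> C0G f -> I (fun w => RtoC (h w)) -> (forall w, 0 <= h w) ->
  (forall w, eps <= Cmod (f w) -> 1 / 4 <= h w) ->
  exists g, I g /\ forall w, Cmod (Cminus (f w) (g w)) <= eps.
Proof.
  intros Heps Hf Ih Hh Hbig. destruct HI as (HC & _ & Hadd & _ & Hmul & _).
  (* the factor 1 + |f|^2 makes h2 dominate |f| where |f| >= eps, without bounding f *)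
  set (h2 := fun w => h w * (1 + Cmod (f w) ^ 2)).
  assert (Hh2 : forall w, 0 <= h2 w).
  { intro w. pose proof (Hh w). pose proof (pow2_ge_0 (Cmod (f w))). unfold h2. nra. }
  assert (Ih2 : I (fun w => RtoC (h2 w))).
  { eapply ideal_ext; [apply (Hadd _ _ Ih (Hmul _ _ Ih (C0G_conj_mult f Hf)))|].
    intro w. unfold h2. rewrite (Cmult_comm (Cconj (f w))), <- Cmod2_conj.
    unfold Cplus, Cmult, RtoC; simpl. f_equal; ring. }
  set (c := eps / 2).
  set (k := fun w => Cmult (f w) (Cinv (Cplus (RtoC c) (RtoC (h2 w))))).
  assert (Hden : forall w, Cmod (Cplus (RtoC c) (RtoC (h2 w))) = c + h2 w).
  { intro w. rewrite <- RtoC_plus, Cmod_R, Rabs_pos_eq; [reflexivity|]. pose proof (Hh2 w). unfold c. lra. }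
  assert (Hn : forall w, Cplus (RtoC c) (RtoC (h2 w)) <> 0%C).
  { intro w. apply Cmod_gt_0. rewrite Hden. pose proof (Hh2 w). unfold c. lra. }
  assert (Hk : C0G k).
  { split.
    - apply contG_mult; [exact (proj1 Hf)|]. apply (contG_inv _ c); [unfold c; lra| |].
      + intro w. rewrite Hden. pose proof (Hh2 w). lra.
      + apply contG_const_add. exact (proj1 (HC _ Ih2)).
    - apply (vanish_at_inf_dominated f); [exact (proj2 Hf)|].
      intros e He. exists (e * c). split; [unfold c; nra|]. intros w Hw. unfold k.
      rewrite Cmod_mult, Cmod_inv, Hden by apply Hn.
      pose proof (Hh2 w). pose proof (Cmod_ge_0 (f w)).
      apply Rlt_div_l; [unfold c; lra|]. unfold c in *. nra. }
  exists (fun w => Cmult (k w) (RtoC (h2 w))). split; [exact (Hmul _ _ Ih2 Hk)|].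
  intro w. pose proof (Hh2 w).
  replace (Cminus (f w) (Cmult (k w) (RtoC (h2 w))))
    with (Cmult (f w) (Cdiv (RtoC c) (Cplus (RtoC c) (RtoC (h2 w))))) by (unfold k; field; apply Hn).
  rewrite Cmod_mult, Cmod_div, Cmod_R, Hden, Rabs_pos_eq by (apply Hn || (unfold c; lra)).
  apply damped_error_le; auto using Cmod_ge_0.
  intro Hw. pose proof (Hbig w Hw). pose proof (pow2_ge_0 (Cmod (f w))). unfold h2. nra.
Qed.

Lemma ideal_of_hull_vanishing (f : Gpt -> C) : C0G f ->
  (forall w : Gpt, hull I (proj1_sig w) -> f w = 0%C) -> I f.
Proof.
  intros Hf Hz. destruct HI as (_ & _ & _ & _ & _ & Hclosed).
  apply Hclosed; [exact Hf|]. intros eps Heps.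
  destruct (ideal_finite_local_units f eps Heps Hf Hz) as (l & Il & Hl).
  apply (ideal_approx_of_bump f (sum_sq_mod l) eps Heps Hf).
  - exact (ideal_sum_sq_mod l Il).
  - apply sum_sq_mod_nonneg.
  - intros w Hw. destruct (Hl w Hw) as (g & Hg & Hgw).
    pose proof (sum_sq_mod_ge l g w Hg). pose proof (Cmod_ge_0 (g w)). nra.
Qed.

End ClosedIdeal.

Definition hull_radii (I : (Gpt -> C) -> Prop) (t : R) : Prop :=
  0 <= t < 1 /\ hull I (symm (RtoC 0) (RtoC t)).

Lemma hull_radii_closed (I : (Gpt -> C) -> Prop) :
  (forall f, I f -> C0G f) -> closed_in_01 (hull_radii I).
Proof.
  intro HC. split; [now intros x [Hx _]|].
  intros x Hx Happ. split; [exact Hx|].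
  intros f If v Hv. apply NNPP. intro Hfv.
  assert (Heps : 0 < Cmod (f v)) by now apply Cmod_gt_0.
  destruct (proj1 (HC f If) v _ Heps) as (d & Hd & Hcont).
  destruct (Happ d Hd) as (y & [Hy Hhy] & Hxy).
  assert (Gy : inG (symm (RtoC 0) (RtoC y))).
  { exists (RtoC 0), (RtoC y). split; [apply inD_0|]. split; [apply inD_RtoC, Hy|reflexivity]. }
  specialize (Hcont (exist inG _ Gy)). rewrite Hv in Hcont. simpl proj1_sig in Hcont.
  rewrite dist2_symm_0, (Hhy f If (exist inG _ Gy) eq_refl) in Hcont.
  replace (Cminus (f v) 0%C) with (f v) in Hcont by ring.
  specialize (Hcont Hxy). lra.
Qed.

Lemma hull_iff_qpre (I : (Gpt -> C) -> Prop) (w : Gpt) : AutG_invariant I ->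
  hull I (proj1_sig w) <-> qpre (hull_radii I) w.
Proof.
  intro HA. split.
  - intro Hw. destruct (proj2_sig w) as (z1 & z2 & H1 & H2 & E).
    exists z1, z2. split; [exact H1|]. split; [exact H2|]. split; [exact E|].
    split; [apply qval_range; auto|].
    apply (hull_iff_qval I z1 z2 HA H1 H2). rewrite <- E. exact Hw.
  - intros (z1 & z2 & H1 & H2 & E & _ & Hq). rewrite E.
    exact (proj2 (hull_iff_qval I z1 z2 HA H1 H2) Hq).
Qed.

Theorem theorem4p1 :
  forall I : (Gpt -> C) -> Prop,
    closed_ideal I -> AutG_invariant I ->
    exists Lam : R -> Prop, closed_in_01 Lam /\
      forall f : Gpt -> C, I f <-> ideal_of (qpre Lam) f.
Proof.
  intros I HI HA. exists (hull_radii I). split; [exact (hull_radii_closed I (proj1 HI))|].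
  intro f. split.
  - intro If. split; [exact (proj1 HI f If)|].
    intros w Hw. exact (proj2 (hull_iff_qpre I w HA) Hw f If w eq_refl).
  - intros [Hf Hz]. apply (ideal_of_hull_vanishing I HI f Hf).
    intros w Hw. apply Hz, (hull_iff_qpre I w HA), Hw.
Qed.
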